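(* Let $R$ be an environment with a single door pixel $s$, and let $A=|R|$ be the number of its pixels. Run the Depth-First Leader-Follower (DFLF) strategy defined in the context. The algorithm halts exactly when all pixels of $R$ are occupied by robots, and its makespan is $2A-1$.
   Context: Pixels are the unit squares of the integer grid, identified with their lower-left corners $(i,j)\in\mathbb{Z}^2$. Two pixels are neighbors if they share an edge, so $(i,j)$ has the four neighbors $(i\pm1,j)$ and $(i,j\pm1)$. The environment $R$ is a finite set of pixels that is connected under this neighbor relation. It contains a single distinguished door pixel $s\in R$. Time is discrete, $t=0,1,2,\dots$. At each time, every pixel of $R$ holds at most one robot. $p(r,t)$ denotes the pixel occupied by robot $r$ at time $t$, and $\mathrm{prev}(r,t)=p(r,t-1)$. In one time step a robot either stays where it is or moves to a neighboring pixel of $R$ that is unoccupied. Vacating rule: if a robot occupies pixel $q$ at time $t$ and a different pixel at time $t+1$, then no robot occupies $q$ at time $t+1$; so the earliest a vacated pixel can be re-entered is time $t+2$. At time $0$ exactly one robot is present, on $s$. Door rule: whenever the robot on $s$ leaves, a new robot appears on $s$ as soon as the vacating rule allows. A pixel of $R$ is a frontier pixel at time $t$ if no robot has occupied it at any time $\le t$. The DFLF strategy works as follows. - Each robot is either moving or stopped. A moving robot is either the leader or a follower. - The first robot is the leader. Each newly appearing robot becomes the successor of the robot that most recently left the door, and that robot becomes its predecessor $\mathrm{pred}(r)$. These relations never change. - At each step, the leader behaves as follows. If the leader has a neighboring frontier pixel, it moves to one of them (chosen arbitrarily). Otherwise it becomes stopped permanently and leadership passes to its successor. If the leader has no frontier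 neighbor and is on the door $s$, the algorithm halts. - A follower $r$ moves at time $t$ to the pixel $\mathrm{prev}(\mathrm{pred}(r),t)$ previously occupied by its predecessor. - A stopped robot never moves again. Makespan: the first time $t^*$ at which every pixel of $R$ is occupied. *)

From HB Require Import structures.
From mathcomp Require Import all_boot all_order all_algebra.
From mathcomp Require Import finmap.
Set Implicit Arguments. Unset Strict Implicit. Unset Printing Implicit Defensive.

Local Open Scope fset_scope.

(* Pixels = lower-left corners in Z^2. *)
Definition pixel := (int * int)%type.

Definition adj (p q : pixel) : bool :=
  (absz (p.1 - q.1)%R + absz (p.2 - q.2)%R == 1)%N.

Definition env_connected (R : {fset pixel}) : Prop :=
  forall p q, p \in R -> q \in R ->
    exists l : seq pixel, path adj p l /\ last p l = q /\ all (fun x => x \in R) l.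

Inductive rstatus := Leader | Follower | Stopped.

(* Robots are labelled 0,1,2,... in their order
   of appearance.
   rpos k t  = pixel of robot k at time t (None = not yet appeared);
   rst k t   = status of robot k at time t (meaningful when present);
   rpred k   = predecessor of robot k (fixed once and for all);
   nrob t    = number of robots that have appeared by time t. *)
Record run := Run {
  rpos  : nat -> nat -> option pixel;
  rst   : nat -> nat -> rstatus;
  rpred : nat -> nat;
  nrob  : nat -> nat }.

Section DFLF.
Variables (R : {fset pixel}) (s : pixel) (X : run).

Definition occupied_at (q : pixel) (t : nat) : Prop :=
  exists k, rpos X k t = Some q.

Definition frontier (q : pixel) (t : nat) : Prop :=
  q \in R /\ forall t', t' <= t -> ~ occupied_at q t'.

Definition has_frontier_nbr (p : pixel) (t : nat) : Prop :=
  exists q, adj p q /\ frontier q t.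

Definition halts_at (t : nat) : Prop :=
  exists k, k < nrob X t /\ rst X k t = Leader /\ rpos X k t = Some s /\
            ~ has_frontier_nbr s t.

Definition all_occupied (t : nat) : Prop :=
  forall q, q \in R -> occupied_at q t.

(* robot k is on s at time t-1 and not on s at time t (it left the door
   during step t-1 -> t); by the vacating rule a new robot appears at t+1 *)
Definition left_door (t k : nat) : Prop :=
  0 < t /\ rpos X k t.-1 = Some s /\ rpos X k t <> Some s.

(* status at time t' of a non-first robot j that is not yet stopped:
   it is the leader iff its predecessor is stopped (leadership passed). *)
Definition inherited_status (j t' : nat) : rstatus :=
  if rst X (rpred X j) t' is Stopped then Leader else Follower.

Definition robot_step (k t : nat) : Prop :=
  match rst X k t with
  | Stopped => rpos X k t.+1 = rpos X k t /\ rst X k t.+1 = Stopped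
  | Leader => exists p, rpos X k t = Some p /\
      ((has_frontier_nbr p t /\
        exists q, adj p q /\ frontier q t /\
                  rpos X k t.+1 = Some q /\ rst X k t.+1 = Leader)
       \/ (~ has_frontier_nbr p t /\
           rpos X k t.+1 = Some p /\ rst X k t.+1 = Stopped))
  | Follower =>
      (* moves to prev(pred k, t) = position of pred k at time t-1 *)
      rpos X k t.+1 = rpos X (rpred X k) t.-1 /\
      rst X k t.+1 = inherited_status k t.+1
  end.

Definition door_step (t : nat) : Prop :=
  ((exists k, left_door t k) ->
     nrob X t.+1 = (nrob X t).+1 /\
     rpos X (nrob X t) t.+1 = Some s /\
     left_door t (rpred X (nrob X t)) /\   (* pred = robot that most recently left the door *)
     rst X (nrob X t) t.+1 = inherited_status (nrob X t) t.+1) /\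
  (~ (exists k, left_door t k) -> nrob X t.+1 = nrob X t).

(* X is an execution of DFLF on (R, s) (constrained up to the first halt) *)
Definition is_dflf_run : Prop :=
  [/\ nrob X 0 = 1, rpos X 0 0 = Some s, rst X 0 0 = Leader,
      (forall k t, nrob X t <= k -> rpos X k t = None) &
      (forall t, (forall t', t' <= t -> ~ halts_at t') ->
         (forall k, k < nrob X t -> robot_step k t) /\ door_step t)].

End DFLF.

From mathcomp Require Import all_boot ssrint.
From mathcomp Require Import finmap zify.
From Stdlib Require Import Classical.
Local Open Scope fset_scope.
Local Open Scope nat_scope.
Set Implicit Arguments. Unset Strict Implicit.

(* DFLF is a depth-first search carried out by a train of robots.  Robot r
   enters at time 2r.  At any time t before the halt the first L robots are
   stopped, on pixels Q, and every later robot r trails the leader (robot L)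
   along the depth-first stack s :: S, occupying its (t - 2r)-th pixel.  A step
   either pushes a frontier pixel onto S, or, when the leader is stuck, pops
   the top of S, which stays occupied by the now stopped leader.  Hence
   |S| + 2L = t, and the pixels occupied so far are exactly s :: S ++ Q, all
   distinct.  The run halts when S is empty and the leader is stuck on s; then
   s :: Q is closed under adjacency, so it is R by connectivity, and the halting
   time is 2(|R| - 1). *)

Lemma ex_minimal (P : nat -> Prop) n :
  P n -> exists m, P m /\ forall k, k < m -> ~ P k.
Proof.
elim/ltn_ind: n => n IH Pn.
case: (classic (exists2 k, k < n & P k)) => [[k lt_kn Pk]|no_lt]; first exact: IH Pk.
by exists n; split=> // k lt_kn Pk; apply: no_lt; exists k.
Qed.

Lemma nth_rcons_prefix (T : Type) (x0 x : T) (l : seq T) i :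
  i <= size l -> nth x0 (x0 :: rcons l x) i = nth x0 (x0 :: l) i.
Proof. by move=> le_il; rewrite -rcons_cons nth_rcons /= ltnS le_il. Qed.

Lemma status_chain (st : nat -> rstatus) (l n : nat) :
  (l < n -> st l = Leader) ->
  (forall k, l < k < n -> st k = if st k.-1 is Stopped then Leader else Follower) ->
  forall r, l <= r < n -> st r = if r == l then Leader else Follower.
Proof.
move=> st_l st_k; elim=> [|r IH] /andP [le_lr lt_rn].
  by move: le_lr; rewrite leqn0 => /eqP l0; subst l; rewrite eqxx st_l.
case: (eqVneq r.+1 l) => [e|ne]; first by rewrite /= e st_l // -e.
rewrite st_k /= ?IH; [by case: (r == l)|lia..].
Qed.

Section DFLFRun.
Variables (R : {fset pixel}) (s : pixel) (X : run).
Hypothesis dflf : is_dflf_run R s X.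

Lemma rpos_absent k t : nrob X t <= k -> rpos X k t = None.
Proof. by case: dflf => _ _ _ absent _; apply: absent. Qed.

Lemma dflf_step t : (forall t', t' <= t -> ~ halts_at R s X t') ->
  (forall k, k < nrob X t -> robot_step R X k t) /\ door_step s X t.
Proof. by case: dflf => _ _ _ _; apply. Qed.

Record config (t : nat) (S Q : seq pixel) : Prop := Config {
  config_nrob : nrob X t = t./2.+1;
  config_size : size S + 2 * size Q = t;
  config_uniq : uniq (s :: S ++ Q);
  config_sub : {subset s :: S ++ Q <= R};
  config_stopped : forall r, r < size Q ->
    rpos X r t = Some (nth s Q r) /\ rst X r t = Stopped;
  config_trail : forall r t', size Q <= r < nrob X t -> 2 * r <= t' <= t ->
    rpos X r t' = Some (nth s (s :: S) (t' - 2 * r));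
  config_status : forall r, size Q <= r < nrob X t ->
    rst X r t = if r == size Q then Leader else Follower;
  config_pred : forall r, 0 < r < nrob X t -> rpred X r = r.-1;
  config_visited : forall x,
    (exists2 t', t' <= t & occupied_at X x t') <-> x \in s :: S ++ Q;
  config_closed : forall x y, x \in Q -> adj x y -> y \in R -> y \in s :: S ++ Q }.

Definition reachable_config t := exists S Q, config t S Q.

Lemma occupied_in_config t S Q x :
  (forall r, r < size Q -> rpos X r t = Some (nth s Q r)) ->
  (forall r, size Q <= r < nrob X t -> rpos X r t = Some (nth s (s :: S) (t - 2 * r))) ->
  occupied_at X x t -> x \in s :: S ++ Q.
Proof.
move=> stopped trail [k pos_k].
case: (leqP (nrob X t) k) => lt_nk; first by rewrite rpos_absent in pos_k.
case: (ltnP k (size Q)) => lt_kQ.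
  by move: pos_k; rewrite stopped // => -[<-]; rewrite in_cons mem_cat mem_nth ?orbT.
have: x \in s :: S.
  move: pos_k; rewrite trail ?lt_kQ // => -[<-].
  case: (ltnP (t - 2 * k) (size (s :: S))) => [/mem_nth //|/(nth_default s) ->].
  exact: mem_head.
by rewrite !in_cons mem_cat => /orP [->|->]; rewrite ?orbT.
Qed.

Lemma config_on_door t S Q k : config t S Q -> rpos X k t = Some s <-> t = 2 * k.
Proof.
move=> cfg; have nr := config_nrob cfg; have sz := config_size cfg.
move: (config_uniq cfg); rewrite cons_uniq mem_cat negb_or => /andP [/andP [sS sQ] _].
split=> [pos_k|e]; last first.
  by rewrite (config_trail cfg (r := k) (t' := t)); [rewrite e subnn|lia..].
case: (leqP (nrob X t) k) => lt_nk; first by rewrite rpos_absent in pos_k.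
case: (ltnP k (size Q)) => lt_kQ.
  by case: (config_stopped cfg lt_kQ) pos_k => -> _ [e]; rewrite -e mem_nth in sQ.
move: pos_k; rewrite (config_trail cfg (r := k) (t' := t)); [|lia|lia].
case e: (t - 2 * k) => [|i] /= => [_|[ei]]; first lia.
have lt_iS : i < size S by lia.
by rewrite -ei mem_nth in sS.
Qed.

Lemma config_nbr_visited t S Q p y : config t S Q ->
  ~ has_frontier_nbr R X p t -> adj p y -> y \in R -> y \in s :: S ++ Q.
Proof.
move=> cfg stuck adj_py yR; case: (boolP (y \in _)) => // y_new; exfalso; apply: stuck.
exists y; split=> //; split=> // t' le_t' occ.
by move/negP: y_new; apply; apply/(config_visited cfg); exists t'.
Qed.

Lemma config_nil_halts t Q : config t [::] Q ->
  ~ has_frontier_nbr R X s t -> halts_at R s X t.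
Proof.
move=> cfg stuck; have nr := config_nrob cfg; have /= sz := config_size cfg.
exists (size Q); split; first by lia.
split; first by rewrite (config_status cfg) ?eqxx //; lia.
by split=> //; apply/(config_on_door (size Q) cfg).
Qed.

Lemma visited_succ t (V V' : seq pixel) :
  (forall x, (exists2 t', t' <= t & occupied_at X x t') <-> x \in V) ->
  (forall x, occupied_at X x t.+1 -> x \in V') -> {subset V <= V'} ->
  (forall x, x \in V' -> x \in V \/ occupied_at X x t.+1) ->
  forall x, (exists2 t', t' <= t.+1 & occupied_at X x t') <-> x \in V'.
Proof.
move=> visited occ_now sub_V new_V' x; split.
  case=> t'; rewrite leq_eqVlt ltnS => /orP [/eqP -> //|le_t'] occ; first exact: occ_now.
  by apply: sub_V; apply/visited; exists t'.
case/new_V' => [/visited [t' le_t' occ]|occ]; last by exists t.+1.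
by exists t' => //; apply: leqW.
Qed.

Section Step.
Variables (t : nat) (S Q : seq pixel).
Hypothesis cfg : config t S Q.
Hypothesis cfg_prev : 0 < t -> reachable_config t.-1.
Hypothesis running : forall t', t' <= t -> ~ halts_at R s X t'.

Let L := size Q.

Lemma left_door_iff k : left_door s X t k <-> t = (2 * k).+1.
Proof.
have on_door_prev : 0 < t -> rpos X k t.-1 = Some s <-> t.-1 = 2 * k.
  by move=> t_gt0; case: (cfg_prev t_gt0) => S' [Q' /config_on_door]; apply.
split=> [[t_gt0 [was_on now_off]]|e].
  have not_now : t <> 2 * k by move=> e; apply: now_off; apply: (config_on_door k cfg).2.
  by have := (on_door_prev t_gt0).1 was_on; lia.
have t_gt0 : 0 < t by lia.
split=> //; split; first by apply: (on_door_prev t_gt0).2; lia.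
by move/(config_on_door k cfg); lia.
Qed.

Lemma door_succ :
  (t.+1 = 2 * nrob X t ->
     [/\ nrob X t.+1 = (nrob X t).+1, rpos X (nrob X t) t.+1 = Some s,
         rpred X (nrob X t) = (nrob X t).-1 &
         rst X (nrob X t) t.+1 = inherited_status X (nrob X t) t.+1]) /\
  (t.+1 <> 2 * nrob X t -> nrob X t.+1 = nrob X t).
Proof.
have [_ [some_left no_left]] := dflf_step running; have nr := config_nrob cfg.
split=> [e|ne].
  have [|-> [-> [/left_door_iff ? ->]]] := some_left.
    by exists (nrob X t).-1; apply/left_door_iff; lia.
  by split=> //; lia.
by apply: no_left => -[k /left_door_iff]; lia.
Qed.

Lemma nrob_succ : nrob X t.+1 = t.+1./2.+1.
Proof.
have [new same] := door_succ; have nr := config_nrob cfg.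
case: (eqVneq t.+1 (2 * nrob X t)) => [e|/eqP ne]; last by rewrite same //; lia.
by have [-> _ _ _] := new e; lia.
Qed.

Lemma stopped_succ r : r < L ->
  rpos X r t.+1 = Some (nth s Q r) /\ rst X r t.+1 = Stopped.
Proof.
move=> lt_rL; have [pos st] := config_stopped cfg lt_rL.
have lt_rn : r < nrob X t by have := config_size cfg; have := config_nrob cfg; lia.
by have := (dflf_step running).1 r lt_rn; rewrite /robot_step st pos.
Qed.

Lemma follower_succ k : L < k < nrob X t.+1 ->
  rpos X k t.+1 = Some (nth s (s :: S) (t.+1 - 2 * k)) /\
  rst X k t.+1 = (if rst X k.-1 t.+1 is Stopped then Leader else Follower).
Proof.
move=> /andP [lt_Lk lt_kn]; have nr := config_nrob cfg; have sz := config_size cfg.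
case: (ltnP k (nrob X t)) => [lt_k|le_k].
  have := (dflf_step running).1 k lt_k.
  rewrite /robot_step (config_status cfg) ?(gtn_eqF lt_Lk) ?lt_k ?(ltnW lt_Lk) //.
  rewrite /inherited_status (config_pred cfg) ?lt_k ?(leq_ltn_trans _ lt_Lk) //.
  case=> -> ->; split=> //.
  by rewrite (config_trail cfg (r := k.-1) (t' := t.-1)); [congr (Some (nth _ _ _))|..]; lia.
have nr' := nrob_succ; have new : t.+1 = 2 * nrob X t by lia.
have [_ pos pred st] := door_succ.1 new.
rewrite (_ : k = nrob X t) ?pos ?st /inherited_status ?pred; last by lia.
by rewrite (_ : t.+1 - 2 * nrob X t = 0); last by lia.
Qed.

Lemma pred_succ r : 0 < r < nrob X t.+1 -> rpred X r = r.-1.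
Proof.
move=> /andP [r_gt0 lt_rn]; case: (ltnP r (nrob X t)) => lt_r.
  by apply: (config_pred cfg); rewrite r_gt0.
have nr := config_nrob cfg; have nr' := nrob_succ.
have new : t.+1 = 2 * nrob X t by lia.
have [_ _ pred _] := door_succ.1 new.
by rewrite (_ : r = nrob X t); last by lia.
Qed.

Lemma leader_succ :
  (exists2 q, frontier R X q t &
     rpos X L t.+1 = Some q /\ rst X L t.+1 = Leader) \/
  [/\ ~ has_frontier_nbr R X (last s S) t,
      rpos X L t.+1 = Some (last s S) & rst X L t.+1 = Stopped].
Proof.
have nr := config_nrob cfg; have sz := config_size cfg.
have lt_Ln : L < nrob X t by lia.
have := (dflf_step running).1 L lt_Ln.
rewrite /robot_step (config_status cfg) ?eqxx; last by lia.
move=> [p [pos_L step]].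
have -> : last s S = p.
  rewrite -[last s S]/(last s (s :: S)) -nth_last /=.
  move: pos_L; rewrite (config_trail cfg (r := L) (t' := t)); [|lia|lia].
  by rewrite (_ : t - 2 * L = size S); [case|lia].
case: step => [[_ [q [_ [fr [pos st]]]]]|[stuck [pos st]]].
  by left; exists q.
by right.
Qed.

Lemma trail_succ l S' : L <= l ->
  (forall r, l <= r < nrob X t.+1 ->
     rpos X r t.+1 = Some (nth s (s :: S') (t.+1 - 2 * r))) ->
  (forall i, i <= t - 2 * l -> nth s (s :: S') i = nth s (s :: S) i) ->
  forall r t', l <= r < nrob X t.+1 -> 2 * r <= t' <= t.+1 ->
    rpos X r t' = Some (nth s (s :: S') (t' - 2 * r)).
Proof.
move=> le_Ll now same r t' lr /andP [le_rt' le_t'].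
case: (ltnP t' t.+1) => [lt_t'|ge_t']; last by rewrite (_ : t' = t.+1); [apply: now|lia].
have nr := config_nrob cfg.
rewrite same; last by lia.
by apply: (config_trail cfg); lia.
Qed.

Lemma config_push q : frontier R X q t ->
  rpos X L t.+1 = Some q -> rst X L t.+1 = Leader -> config t.+1 (rcons S q) Q.
Proof.
move=> [qR q_new] pos_L st_L.
have nr := config_nrob cfg; have sz := config_size cfg; have nr' := nrob_succ.
have q_unseen : q \notin s :: S ++ Q.
  by apply/negP => /(config_visited cfg) [t' le_t' occ]; apply: q_new occ.
have perm : perm_eq (s :: rcons S q ++ Q) (q :: s :: S ++ Q).
  by rewrite cat_rcons -cat_cons -[q :: Q]/([:: q] ++ Q) perm_catCA.
have now : forall r, L <= r < nrob X t.+1 ->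
    rpos X r t.+1 = Some (nth s (s :: rcons S q) (t.+1 - 2 * r)).
  move=> r /andP [le_Lr lt_rn]; case: (ltnP L r) => lt_Lr.
    have [-> _] := follower_succ (introT andP (conj lt_Lr lt_rn)).
    by rewrite nth_rcons_prefix //; lia.
  have -> : r = L by lia.
  have top : t.+1 - 2 * L = (size S).+1 by lia.
  by rewrite pos_L top -rcons_cons nth_rcons /= ltnn eqxx.
have prefix : forall i, i <= t - 2 * L -> nth s (s :: rcons S q) i = nth s (s :: S) i.
  by move=> i le_i; rewrite nth_rcons_prefix //; lia.
have trail := trail_succ (leqnn L) now prefix.
split=> //.
- by rewrite size_rcons; lia.
- by rewrite (perm_uniq perm) cons_uniq q_unseen (config_uniq cfg).
- by move=> x; rewrite (perm_mem perm) in_cons => /orP [/eqP -> //|/(config_sub cfg)].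
- exact: stopped_succ.
- apply: status_chain => [_|k]; first exact: st_L.
  by move=> k_range; have [_ ->] := follower_succ k_range.
- exact: pred_succ.
- apply: (visited_succ (config_visited cfg)).
  + move=> y; apply: occupied_in_config => [r /stopped_succ [] //|r r_range].
    by apply: trail; lia.
  + by move=> x x_old; rewrite (perm_mem perm) in_cons x_old orbT.
  + move=> x; rewrite (perm_mem perm) in_cons => /orP [/eqP ->|]; last by left.
    by right; exists L.
- move=> x y xQ adj_xy yR.
  by rewrite (perm_mem perm) in_cons (config_closed cfg xQ adj_xy yR) orbT.
Qed.

Lemma config_pop S1 x : S = rcons S1 x -> ~ has_frontier_nbr R X x t ->
  rpos X L t.+1 = Some x -> rst X L t.+1 = Stopped -> config t.+1 S1 (rcons Q x).
Proof.
move=> eS stuck pos_L st_L.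
have nr := config_nrob cfg; have sz := config_size cfg; have nr' := nrob_succ.
rewrite eS size_rcons in sz.
have perm : perm_eq (s :: S1 ++ rcons Q x) (s :: S ++ Q).
  by rewrite eS cat_rcons perm_cons perm_cat2l perm_rcons.
have now : forall r, L.+1 <= r < nrob X t.+1 ->
    rpos X r t.+1 = Some (nth s (s :: S1) (t.+1 - 2 * r)).
  move=> r r_range; have r_range' : L < r < nrob X t.+1 by lia.
  have [-> _] := follower_succ r_range'.
  by rewrite eS nth_rcons_prefix //; lia.
have prefix : forall i, i <= t - 2 * L.+1 -> nth s (s :: S1) i = nth s (s :: S) i.
  by move=> i le_i; rewrite eS nth_rcons_prefix //; lia.
have trail := trail_succ (leqnSn L) now prefix.
have stopped : forall r, r < L.+1 ->
    rpos X r t.+1 = Some (nth s (rcons Q x) r) /\ rst X r t.+1 = Stopped.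
  move=> r; rewrite ltnS leq_eqVlt => /orP [/eqP ->|lt_rL].
    by rewrite nth_rcons ltnn eqxx pos_L st_L.
  by rewrite nth_rcons lt_rL; apply: stopped_succ.
split; rewrite ?size_rcons //.
- lia.
- by rewrite (perm_uniq perm) (config_uniq cfg).
- by move=> y; rewrite (perm_mem perm) => /(config_sub cfg).
- apply: status_chain => [lt_L|k k_range].
    have L_range : L < L.+1 < nrob X t.+1 by rewrite ltnSn.
    by have [_ ->] := follower_succ L_range; rewrite /= st_L.
  have k_range' : L < k < nrob X t.+1 by lia.
  by have [_ ->] := follower_succ k_range'.
- exact: pred_succ.
- apply: (visited_succ (config_visited cfg)).
  + move=> y; apply: occupied_in_config => r; rewrite size_rcons; first by case/stopped.
    by move=> r_range; apply: trail; lia.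
  + by move=> y; rewrite (perm_mem perm).
  + by move=> y; rewrite (perm_mem perm); left.
- move=> z y; rewrite (perm_mem perm) mem_rcons in_cons => /orP [/eqP ->|zQ] adj_zy yR.
    exact: config_nbr_visited cfg stuck adj_zy yR.
  exact: config_closed cfg _ _ zQ adj_zy yR.
Qed.

Lemma reachable_succ : reachable_config t.+1.
Proof.
case: leader_succ => [[q fr [pos st]]|[stuck pos st]].
  by exists (rcons S q), Q; apply: config_push.
case E: S stuck pos st => [|y S'] /= stuck pos st.
  have cfg_nil : config t [::] Q by rewrite -E.
  by case: (running (leqnn t)); apply: config_nil_halts cfg_nil stuck.
exists (belast y S'), (rcons Q (last y S')).
by apply: config_pop; rewrite // -lastI.
Qed.

End Step.

Lemma config_start : s \in R -> config 0 [::] [::].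
Proof.
case: dflf => n0 pos0 st0 absent _ sR; split=> //=.
- by move=> x; rewrite inE => /eqP ->.
- move=> r t'; rewrite n0 => lt_r le_t'.
  by have [-> ->] : r = 0 /\ t' = 0 by lia.
- by move=> r; rewrite n0 => lt_r; rewrite (_ : r = 0) //; lia.
- by move=> r; rewrite n0; lia.
- move=> x; split=> [[t']|]; last by rewrite inE => /eqP ->; exists 0 => //; exists 0.
  rewrite leqn0 => /eqP -> [k pos_k]; rewrite inE.
  case: (leqP (nrob X 0) k) => lt_k; first by rewrite absent in pos_k.
  have k0 : k = 0 by lia.
  by move: pos_k; rewrite k0 pos0 => -[->].
Qed.

Lemma reachable_before_halt t : s \in R ->
  (forall t', t' < t -> ~ halts_at R s X t') -> forall u, u <= t -> reachable_config u.
Proof.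
move=> sR; elim: t => [|t IH] running u le_ut.
  by rewrite (_ : u = 0); [exists [::], [::]; apply: config_start|lia].
have IH' := IH (fun t' lt_t' => running t' (ltnW lt_t')).
case: (leqP u t) => [/IH' //|lt_tu]; have -> : u = t.+1 by lia.
have [S [Q cfg]] := IH' t (leqnn t).
apply: (reachable_succ cfg) => [_|t' le_t']; first by apply: IH'; lia.
by apply: running; lia.
Qed.

Lemma size_le_card (l : seq pixel) : uniq l -> {subset l <= R} -> size l <= #|` R|.
Proof.
move=> uq sub; rewrite -(undup_id uq) -card_fseq; apply: fsubset_leq_card.
by apply/fsubsetP => x; rewrite inE; apply: sub.
Qed.

Lemma card_le_size (l : seq pixel) : uniq l -> {subset R <= l} -> #|` R| <= size l.
Proof.
move=> uq sub; rewrite -(undup_id uq) -card_fseq; apply: fsubset_leq_card.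
by apply/fsubsetP => x xR; rewrite inE; apply: sub.
Qed.

Lemma config_time_bound t S Q : config t S Q -> t <= 2 * #|` R|.
Proof.
move=> cfg; have := size_le_card (config_uniq cfg) (config_sub cfg).
by have := config_size cfg; rewrite /= size_cat; lia.
Qed.

Lemma all_occupied_halts t S Q : config t S Q -> all_occupied R X t -> halts_at R s X t.
Proof.
move=> cfg occ; have sz := config_size cfg; have nr := config_nrob cfg.
case: S cfg sz => [|y S] cfg /= sz.
  apply: config_nil_halts cfg _ => -[q [_ [/occ [k pos_k] q_new]]].
  by apply: (q_new t) => //; exists k.
have [sR yR] : s \in R /\ y \in R by split; apply: (config_sub cfg); rewrite !inE eqxx ?orbT.
have [k' /(config_on_door k' cfg) t_even] := occ s sR.
have [k pos_k] := occ y yR.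
(* s and y sit at indices 0 and 1 of the stack, while a trailing robot r sits at
   index t - 2r: they cannot both be occupied at time t. *)
have uq := config_uniq cfg.
case: (leqP (nrob X t) k) => lt_k; first by rewrite rpos_absent in pos_k.
case: (ltnP k (size Q)) => lt_kQ.
  have yQ : y \notin Q.
    by move: uq => /= /andP [_ /andP [+ _]]; rewrite mem_cat negb_or => /andP [].
  by move: pos_k; rewrite (config_stopped cfg lt_kQ).1 => -[e]; rewrite -e mem_nth in yQ.
have uq' : uniq [:: s, y & S] by move: uq; rewrite -cat_cons cat_uniq => /andP [].
move: pos_k; rewrite (config_trail cfg (r := k) (t' := t)); [|lia|lia] => -[e].
have lt_i : t - 2 * k < size [:: s, y & S] by rewrite /=; lia.
have := nth_uniq s lt_i (isT : 1 < size [:: s, y & S]) uq'.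
by rewrite e /= eqxx => /esym /eqP; lia.
Qed.

Lemma halt_config t S Q : config t S Q -> halts_at R s X t ->
  S = [::] /\ ~ has_frontier_nbr R X s t.
Proof.
move=> cfg [k [lt_k [leader [/(config_on_door k cfg) t_even stuck]]]].
split=> //; have sz := config_size cfg.
case: (ltnP k (size Q)) => [lt_kQ|le_Qk].
  by move: leader; rewrite (config_stopped cfg lt_kQ).2.
move: leader; rewrite (config_status cfg) ?le_Qk //.
by case: eqP => // e _; apply/size0nil; lia.
Qed.

Lemma config_nil_all_occupied t Q : config t [::] Q -> {subset R <= s :: Q} ->
  all_occupied R X t.
Proof.
move=> cfg cover q /cover; rewrite in_cons => /orP [/eqP ->|qQ].
  by exists (size Q); apply/(config_on_door (size Q) cfg); rewrite -(config_size cfg).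
have lt_q : index q Q < size Q by rewrite index_mem.
by exists (index q Q); rewrite (config_stopped cfg lt_q).1 nth_index.
Qed.

End DFLFRun.

Lemma adj_closed_covers (R : {fset pixel}) (V : seq pixel) p :
  env_connected R -> p \in R -> p \in V ->
  (forall x y, x \in V -> adj x y -> y \in R -> y \in V) -> {subset R <= V}.
Proof.
move=> conn pR pV closed q qR; have [l [path_l [<- sub_l]]] := conn p q pR qR.
elim: l p pR pV path_l sub_l => [|y l IH] p pR pV //= /andP [adj_py path_l] /andP [yR sub_l].
exact: IH yR (closed p y pV adj_py yR) path_l sub_l.
Qed.

Theorem mainTheorem3 (R : {fset pixel}) (s : pixel) (X : run) :
  s \in R -> env_connected R -> is_dflf_run R s X ->
  exists T : nat,
    [/\ halts_at R s X T, (forall t, t < T -> ~ halts_at R s X t),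
        all_occupied R X T, (forall t, t < T -> ~ all_occupied R X t) &
        T.+1 = 2 * #|` R| - 1].
Proof.
move=> sR conn dflf.
have [T0 halt0] : exists T, halts_at R s X T.
  apply: NNPP => never.
  have [S [Q cfg]] := reachable_before_halt dflf (t := (2 * #|` R|).+1) sR
    (fun t' _ halt => never (ex_intro _ t' halt)) (leqnn _).
  by have := config_time_bound cfg; lia.
have [T [halt first_halt]] := ex_minimal halt0.
have [S [Q cfg]] := reachable_before_halt dflf sR first_halt (leqnn T).
have [S_nil stuck] := halt_config dflf cfg halt; subst S.
have cover : {subset R <= s :: Q}.
  apply: adj_closed_covers conn sR (mem_head _ _) _ => x y.
  rewrite in_cons => /orP [/eqP -> | xQ] adj_xy yR.
    exact: config_nbr_visited cfg stuck adj_xy yR.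
  exact: config_closed cfg _ _ xQ adj_xy yR.
exists T; split=> //; first exact: config_nil_all_occupied cfg cover.
  move=> t lt_tT occ; apply: (first_halt t lt_tT).
  have [S' [Q' cfg']] := reachable_before_halt dflf sR first_halt (ltnW lt_tT).
  exact: all_occupied_halts cfg' occ.
have := card_le_size (config_uniq cfg) cover.
have := size_le_card (config_uniq cfg) (config_sub cfg).
by have /= := config_size cfg; lia.
Qed.
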